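(* Let $m>1$, $d\in\{2,3,\ldots\}$, consider a Galton–Watson process with offspring distribution supported in $\{0,\ldots,d\}$ with mean $m$, and set $a=\frac{8m}{m-1}$. Then for every positive integer $r$ and every $n\in\mathbb{N}$, \[ \mathbb{P}(W_n>5adr)\le e^{-(\log 3-1)r}+e^{-\frac23 r}. \]
   Context: $(Z_n)_{n\ge 0}$ is a Galton–Watson process with $Z_0=1$, $Z_{n+1}=\sum_{i=1}^{Z_n}\xi_{n,i}$ with $(\xi_{n,i})$ i.i.d. distributed as $Z_1$, $m=\mathbb{E}[Z_1]$, and $W_n=Z_n/m^n$. *)

From HB Require Import structures.
From mathcomp Require Import all_boot all_order all_algebra.
From mathcomp Require Import all_classical all_reals all_analysis.
Set Implicit Arguments. Unset Strict Implicit. Unset Printing Implicit Defensive.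
Import Order.TTheory GRing.Theory Num.Theory.
Local Open Scope classical_set_scope.
Local Open Scope ring_scope.

(* Generation sizes of a Galton--Watson process built from offspring
   variables xi n i (the i-th individual of generation n):
   Z_0 = 1, Z_{n+1} = sum_{i < Z_n} xi n i. *)
Fixpoint GW_Z {T : Type} (xi : nat -> nat -> T -> nat) (n : nat) (t : T) : nat :=
  match n with
  | 0 => 1
  | n'.+1 => \sum_(i < GW_Z xi n' t) xi n' i t
  end.

Definition mutually_independent_nat {d : measure_display} {T : measurableType d}
  {R : realType} (P : probability T R) (X : nat * nat -> T -> nat) : Prop :=
  forall (s : seq (nat * nat)) (k : nat * nat -> nat), uniq s ->
    P (\bigcap_(j in [set` s]) [set t | X j t = k j])
    = (\prod_(j <- s) P [set t | X j t = k j])%E.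

(** The generating function G_n(y) = E[y^Z_n] satisfies G_(n+1) = G_n o f, f the
  offspring generating function, because Z_n is independent of the offspring of
  generation n.  Since the offspring are at most d, f(e^u) <= exp(m u e^(u d)).
  Iterating this bound from u = lam / m^n with lam = (m - 1) / (e d) keeps the
  k-th iterate below lam x e^x with x = m^k / m^n <= 1, so E[exp(lam W_n)] <=
  exp(lam e), and the exponential Markov inequality gives
  P(W_n > z) <= exp(lam e - lam z); for z = 5 a d r this is already at most
  exp(-(log 3 - 1) r). *)

From HB Require Import structures.
From mathcomp Require Import all_boot all_order all_algebra.
From mathcomp Require Import all_classical all_reals all_analysis.
From mathcomp Require Import ring lra.
Set Implicit Arguments. Unset Strict Implicit. Unset Printing Implicit Defensive.
Import Order.TTheory GRing.Theory Num.Theory.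
Local Open Scope classical_set_scope.
Local Open Scope ring_scope.

Section RealInequalities.
Variable R : realType.

Lemma expR_le1DxexpR (y : R) : 0 <= y -> expR y <= 1 + y * expR y.
Proof.
move=> y_ge0.
have : (1 - y) * expR y <= expR (- y) * expR y.
  by apply: ler_wpM2r; [exact: expR_ge0 | exact: expR_ge1Dx].
rewrite [X in _ <= X]mulrC expRxMexpNx_1; lra.
Qed.

Lemma expR1_le4 : expR 1 <= 4 :> R.
Proof.
have half_le := @expR_le1DxexpR (1 / 2) ltac:(lra).
rewrite (_ : 1 = 1 / 2 + 1 / 2 :> R) ?expRD; last by field.
have := expR_gt0 (1 / 2 : R); nra.
Qed.

Lemma ln3_le2 : ln 3 <= 2 :> R.
Proof. by have := @le_ln1Dx R 2 ltac:(lra); rewrite (_ : 1 + 2 = 3 :> R) //; lra. Qed.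

(* With x = m^k / m^n <= 1, the invariant u <= lam x e^x gives u c <= (m - 1) x,
   hence m u e^(u c) <= lam (m x) e^x e^((m - 1) x). *)
Lemma iter_growth_step (m c lam x u : R) : 1 < m -> 0 < c -> 0 <= lam ->
  lam * expR 1 * c = m - 1 -> 0 < x <= 1 -> 0 <= u <= lam * x * expR x ->
  0 <= m * u * expR (u * c) <= lam * (m * x) * expR (m * x).
Proof.
move=> m_gt1 c_gt0 lam_ge0 lam_e_c /andP[x_gt0 x_le1] /andP[u_ge0 u_le].
have uc_le : u * c <= x * (m - 1).
  rewrite -lam_e_c; apply: le_trans (ler_wpM2r (ltW c_gt0) u_le) _.
  rewrite (_ : x * _ = lam * x * expR 1 * c); last by ring.
  apply: ler_wpM2r; first exact: ltW.
  by apply: ler_wpM2l; [apply: mulr_ge0; lra | rewrite ler_expR].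
have mx_split : expR (m * x) = expR x * expR (x * (m - 1)).
  by rewrite -expRD; congr expR; ring.
apply/andP; split.
  by apply: mulr_ge0; [apply: mulr_ge0 => //; lra | exact: expR_ge0].
rewrite mx_split (_ : lam * (m * x) * _ = m * (lam * x * expR x) * expR (x * (m - 1)));
  last by ring.
apply: ler_pM; rewrite ?expR_ge0 ?ler_expR //.
  by apply: mulr_ge0 => //; lra.
by apply: ler_wpM2l => //; lra.
Qed.

Lemma iter_growth_le (m c lam : R) (n k : nat) : 1 < m -> 0 < c -> 0 <= lam ->
  lam * expR 1 * c = m - 1 -> (k <= n)%N ->
  0 <= iter k (fun v => m * v * expR (v * c)) (lam / m ^+ n)
    <= lam * (m ^+ k / m ^+ n) * expR (m ^+ k / m ^+ n).
Proof.
move=> m_gt1 c_gt0 lam_ge0 lam_e_c.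
have mn_gt0 : 0 < m ^+ n by apply: exprn_gt0; lra.
elim: k => [|k IH] kn /=.
  have lam_mn_ge0 : 0 <= lam / m ^+ n by rewrite divr_ge0 // ltW.
  rewrite expr0 div1r lam_mn_ge0 ler_peMr //.
  by rewrite -[leLHS]expR0 ler_expR invr_ge0 ltW.
rewrite (_ : m ^+ k.+1 / m ^+ n = m * (m ^+ k / m ^+ n)); last by rewrite exprS mulrA.
apply: iter_growth_step => //; last exact/IH/ltnW.
have m_gt0 : 0 < m by lra.
by rewrite divr_gt0 ?exprn_gt0 //= ler_pdivrMr // mul1r ler_weXn2l ?ltW // ltnW.
Qed.

Lemma W_tail_exponent (m c r lam : R) : 1 < m -> 1 <= c -> 1 <= r ->
  lam * expR 1 * c = m - 1 ->
  lam * expR 1 - lam * (5 * (8 * m / (m - 1)) * c * r) <= - ((ln 3 - 1) * r).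
Proof.
move=> m_gt1 c_ge1 r_ge1 lam_e_c.
have e_gt0 : 0 < expR 1 :> R by exact: expR_gt0.
have lam_e : lam * expR 1 = (m - 1) / c.
  by rewrite -lam_e_c; field; lra.
have lam_z : lam * (5 * (8 * m / (m - 1)) * c * r) = 40 * m * r / expR 1.
  rewrite (_ : lam = (m - 1) / (expR 1 * c)); last by rewrite -lam_e_c; field; lra.
  by field; repeat (apply/andP; split); apply/negP => /eqP; lra.
have mc_le : (m - 1) / c <= m - 1 by rewrite ler_pdivrMr; nra.
have mre_ge : 10 * m * r <= 40 * m * r / expR 1.
  have : 0 <= m * r by nra.
  rewrite ler_pdivlMr //; have := expR1_le4; nra.
have := ln3_le2; have := @ln_ge0 R 3 ltac:(lra).
rewrite lam_e lam_z; nra.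
Qed.

End RealInequalities.

Section Probability.
Variables (R : realType) (dsp : measure_display) (T : measurableType dsp).
Variable P : probability T R.

Definition pr (E : set T) : R := fine (P E).

Lemma prE E : measurable E -> P E = (pr E)%:E.
Proof. by move=> mE; rewrite /pr fineK // fin_num_measure. Qed.

Lemma pr_ge0 E : 0 <= pr E.
Proof. exact/fine_ge0/measure_ge0. Qed.

Lemma pr_set0 : pr set0 = 0.
Proof. by rewrite /pr measure0. Qed.

Lemma pr_setT : pr setT = 1.
Proof. by rewrite /pr probability_setT. Qed.

Lemma measurable_set_cst (Q : Prop) : measurable [set _ : T | Q].
Proof.
have [q|nq] := pselect Q.
  by rewrite (_ : [set _ | Q] = setT) //; apply/seteqP; split.
by rewrite (_ : [set _ | Q] = set0) //; apply/seteqP; split.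
Qed.

Lemma measurable_nat_pred (f : T -> nat) (Q : nat -> Prop) :
  (forall k, measurable [set t | f t = k]) -> measurable [set t | Q (f t)].
Proof.
move=> mf; rewrite (_ : [set t | _] = \bigcup_(k in Q) [set t | f t = k]).
  exact: bigcup_measurable.
by apply/seteqP; split => [t /= Qf|t [k /= Qk ->] //]; exists (f t).
Qed.

Lemma pr_total_nat (f : T -> nat) (N : nat) (E B : set T) :
  (forall i, measurable [set t | f t = i]) -> measurable E -> P.-negligible B ->
  E `<=` B `|` [set t | (f t < N)%N] ->
  pr E = \sum_(i < N) pr (E `&` [set t | f t = i]).
Proof.
move=> mf mE [B' [mB' PB' BB']] E_sub.
pose F i := E `&` [set t | f t = i].
have mF i : measurable (F i) by exact: measurableI.
have mFN : measurable (\big[setU/set0]_(i < N) F i).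
  by apply: bigsetU_measurable => i _.
have E_eq : E = (\big[setU/set0]_(i < N) F i) `|` (E `&` B').
  rewrite -bigcup_mkord; apply/seteqP; split => t; last by case=> [[i _ []]|[]].
  move=> Et; have [/BB' B't|/= ftN] := E_sub t Et; first by right.
  by left; exists (f t).
have mEB' : measurable (E `&` B') by exact: measurableI.
rewrite {1}E_eq; apply: EFin_inj; rewrite -prE; last exact: measurableU.
rewrite measureU0 //; last by apply: (subset_measure0 mEB' mB') => // t [].
rewrite -sumEFin measure_semi_additive_ord_I //.
- by apply: eq_bigr => i _; rewrite -prE //; exact: mF.
- by move=> i j _ _ [t [[_ <-] [_ <-]]].
Qed.

End Probability.

Section GaltonWatson.
Variables (R : realType) (dsp : measure_display) (T : measurableType dsp).
Variables (P : probability T R) (xi : nat -> nat -> T -> nat).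
Hypothesis xi_measurable : forall n i k, measurable [set t | xi n i t = k].

Local Notation Z := (GW_Z xi).
Local Notation pr := (pr P).

Definition offspring_sum n c t := (\sum_(i < c) xi n i t)%N.

Lemma offspring_sumS n c t :
  offspring_sum n c.+1 t = (offspring_sum n c t + xi n c t)%N.
Proof. by rewrite /offspring_sum big_ord_recr. Qed.

Lemma measurable_offspring_sum n c s : measurable [set t | offspring_sum n c t = s].
Proof.
elim: c s => [|c IH] s.
  rewrite (_ : [set t | _] = [set _ | 0%N = s]); first exact: measurable_set_cst.
  by apply/seteqP; split => t; rewrite /= /offspring_sum big_ord0.
rewrite (_ : [set t | _] = \bigcup_(b in `I_s.+1)
    ([set t | offspring_sum n c t = b] `&` [set t | xi n c t = (s - b)%N])).
  by apply: bigcup_measurable => b _; exact: measurableI.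
apply/seteqP; split => t; rewrite /= offspring_sumS.
  by move=> <-; exists (offspring_sum n c t); rewrite /= ?ltnS ?leq_addr ?addKn.
by move=> [b /= b_le [-> ->]]; rewrite subnKC // -ltnS.
Qed.

Lemma measurable_Z n j : measurable [set t | Z n t = j].
Proof.
elim: n j => [|n IH] j; first exact: (measurable_set_cst _ (1 = j)).
rewrite (_ : [set t | _] =
    \bigcup_i ([set t | Z n t = i] `&` [set t | offspring_sum n i t = j])).
  by apply: bigcupT_measurable => i; apply: measurableI => //; exact: measurable_offspring_sum.
by apply/seteqP; split => [t /= Zj|t [i _ /= [<- //]]]; exists (Z n t).
Qed.

Definition offspring_event (L : seq (nat * nat)) (k : nat * nat -> nat) : set T :=
  \bigcap_(l in [set` L]) [set t | xi l.1 l.2 t = k l].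

Lemma offspring_event_nil k : offspring_event [::] k = setT.
Proof. by apply/seteqP; split => t // _ l. Qed.

Lemma offspring_event_cons l L k :
  offspring_event (l :: L) k = [set t | xi l.1 l.2 t = k l] `&` offspring_event L k.
Proof.
apply/seteqP; split => t.
- move=> ev; split; first by apply: ev; rewrite /= inE eqxx.
  by move=> j jL; apply: ev; rewrite /= inE jL orbT.
- by move=> [xi_l ev] j; rewrite /= inE => /orP[/eqP -> //|]; exact: ev.
Qed.

Lemma eq_offspring_event L k k' :
  {in L, k =1 k'} -> offspring_event L k = offspring_event L k'.
Proof.
move=> kk'; apply/seteqP; split => t ev l lL /=; first by rewrite -kk' //; exact: ev.
by rewrite kk' //; exact: ev.
Qed.

Lemma measurable_offspring_event L k : measurable (offspring_event L k).
Proof.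
elim: L => [|l L IH]; first by rewrite offspring_event_nil.
by rewrite offspring_event_cons; exact: measurableI.
Qed.

Hypothesis xi_indep : mutually_independent_nat P (fun j => xi j.1 j.2).
Hypothesis xi_ident : forall n i k, P [set t | xi n i t = k] = P [set t | xi 0%N 0%N t = k].

Definition pmf a := pr [set t | xi 0%N 0%N t = a].

Lemma pr_xi n i a : pr [set t | xi n i t = a] = pmf a.
Proof. by rewrite /pmf /pr xi_ident. Qed.

Lemma pr_offspring_event L k : uniq L -> pr (offspring_event L k) = \prod_(l <- L) pmf (k l).
Proof.
move=> uL; apply: EFin_inj; rewrite -prE; last exact: measurable_offspring_event.
by rewrite -prodEFin /offspring_event xi_indep //; apply: eq_bigr => l _; rewrite prE // pr_xi.
Qed.

Variable d : nat.
Hypothesis xi_le_d : P [set t | (xi 0%N 0%N t <= d)%N] = 1%E.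

Lemma pr_xi_le n i : pr [set t | (xi n i t <= d)%N] = \sum_(a < d.+1) pmf a.
Proof.
have cover : [set t | (xi n i t <= d)%N] `<=` set0 `|` [set t | (xi n i t < d.+1)%N].
  by move=> t /= xi_le; right.
rewrite (pr_total_nat (xi_measurable n i) _ (negligible_set0 P) cover); last first.
  exact: (measurable_nat_pred (fun k => (k <= d)%N) (xi_measurable _ _)).
apply: eq_bigr => a _; rewrite -(pr_xi n i); congr pr.
by apply/seteqP; split => [t [] //|t /= ->]; split; rewrite // -ltnS.
Qed.

Lemma sum_pmf : \sum_(a < d.+1) pmf a = 1.
Proof. by rewrite -(pr_xi_le 0 0) /pr xi_le_d. Qed.

Lemma P_xi_gt n i : P [set t | (d < xi n i t)%N] = 0%E.
Proof.
have -> : [set t | (d < xi n i t)%N] = ~` [set t | (xi n i t <= d)%N].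
  by apply/seteqP; split => t /=; rewrite ltnNge => /negP.
have m_le : measurable [set t | (xi n i t <= d)%N].
  exact: (measurable_nat_pred (fun k => (k <= d)%N) (xi_measurable _ _)).
by rewrite probability_setC // prE // pr_xi_le sum_pmf subee.
Qed.

Lemma pmf_gt a : (d < a)%N -> pmf a = 0.
Proof.
move=> d_lt_a; have m_gt := measurable_nat_pred (fun k => (d < k)%N) (xi_measurable 0 0).
rewrite /pmf /pr (subset_measure0 (xi_measurable 0 0 a) m_gt _ (P_xi_gt 0 0)) //.
by move=> t /= ->.
Qed.

Definition pgf : {poly R} := \poly_(a < d.+1) pmf a.

Lemma coef_pgf a : pgf`_a = pmf a.
Proof. by rewrite coef_poly; case: ltnP => // /pmf_gt ->. Qed.

Lemma size_pgf : (size pgf <= d.+1)%N.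
Proof. exact: size_poly. Qed.

Lemma horner_pgf y : pgf.[y] = \sum_(a < d.+1) pmf a * y ^+ a.
Proof.
by rewrite (horner_coef_wide _ size_pgf); apply: eq_bigr => a _; rewrite coef_pgf.
Qed.

Lemma pgf_ge0 y : 0 <= y -> 0 <= pgf.[y].
Proof.
by move=> y_ge0; rewrite horner_pgf sumr_ge0 // => a _; rewrite mulr_ge0 ?pr_ge0 ?exprn_ge0.
Qed.

Lemma Z_succ_gt_sub n : [set t | (d ^ n.+1 < Z n.+1 t)%N] `<=`
  [set t | (d ^ n < Z n t)%N] `|` \bigcup_i [set t | (d < xi n i t)%N].
Proof.
move=> t /= Z_gt; apply: contrapT => /not_orP[/negP Zn_le notB].
have xi_le i : (xi n i t <= d)%N.
  by rewrite leqNgt; apply/negP => xi_gt; apply: notB; exists i.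
move: Z_gt; rewrite ltnNge => /negP; apply; rewrite -leqNgt in Zn_le.
apply: (@leq_trans (\sum_(i < Z n t) d)%N); first exact: leq_sum.
by rewrite sum_nat_const card_ord expnSr leq_mul.
Qed.

Lemma Z_gt_pow_negligible n : P.-negligible [set t | (d ^ n < Z n t)%N].
Proof.
elim: n => [|n IH].
  by apply: (negligibleS _ (negligible_set0 P)) => t /=; rewrite expn0 ltnn.
apply: (negligibleS (@Z_succ_gt_sub n)); apply: negligibleU => //.
apply: negligible_bigcup => i; apply/negligibleP; last exact: P_xi_gt.
exact: (measurable_nat_pred (fun k => (d < k)%N) (xi_measurable _ _)).
Qed.

Lemma pr_Z_total n E : measurable E ->
  pr E = \sum_(j < (d ^ n).+1) pr (E `&` [set t | Z n t = j]).
Proof.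
move=> mE; apply: pr_total_nat mE (Z_gt_pow_negligible n) _ => // [j|t _].
  exact: measurable_Z.
by have [|Z_le] := ltnP (d ^ n) (Z n t); [left | right; rewrite /= ltnS].
Qed.

Definition Z_indep n := forall L k j, uniq L -> (forall l, l \in L -> (n <= l.1)%N) ->
  pr ([set t | Z n t = j] `&` offspring_event L k)
  = pr [set t | Z n t = j] * \prod_(l <- L) pmf (k l).

Lemma offspring_sumS_event n c s b L k k' : (b <= s)%N ->
  k' (n, c) = (s - b)%N -> {in L, k' =1 k} ->
  [set t | offspring_sum n c.+1 t = s]
    `&` (offspring_event L k `&` [set t | offspring_sum n c t = b])
  = [set t | offspring_sum n c t = b] `&` offspring_event ((n, c) :: L) k'.
Proof.
move=> b_le k'nc k'E; rewrite offspring_event_cons k'nc (eq_offspring_event k'E).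
apply/seteqP; split => t /=; rewrite offspring_sumS.
- by move=> [<- [ev ->]]; rewrite addKn.
- by move=> [Sb [xi_eq ev]]; rewrite Sb xi_eq subnKC.
Qed.

Lemma pr_Z_offspring_sum n : Z_indep n -> forall c L k j s, uniq L ->
  (forall l, l \in L -> (n < l.1)%N \/ (l.1 = n /\ (c <= l.2)%N)) ->
  pr ([set t | Z n t = j] `&` [set t | offspring_sum n c t = s] `&` offspring_event L k)
  = pr [set t | Z n t = j] * (pgf ^+ c)`_s * \prod_(l <- L) pmf (k l).
Proof.
move=> Zind; elim=> [|c IH] L k j s uL L_later.
  rewrite expr0 coef1; have [->|s_neq0] := eqVneq s 0%N.
    rewrite (_ : [set t | _ = 0%N] = setT) ?setIT; last first.
      by apply/seteqP; split => t //= _; rewrite /offspring_sum big_ord0.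
    by rewrite Zind ?mulr1 // => l /L_later[/ltnW|[-> _]].
  rewrite (_ : _ `&` _ `&` _ = set0) ?pr_set0 ?mulr0 ?mul0r //.
  apply/seteqP; split => // t [[_]]; rewrite /= /offspring_sum big_ord0 => s0.
  by rewrite -s0 eqxx in s_neq0.
set E := _ `&` _ `&` _.
have mE : measurable E.
  apply: measurableI; last exact: measurable_offspring_event.
  by apply: measurableI; [exact: measurable_Z | exact: measurable_offspring_sum].
have cover : E `<=` set0 `|` [set t | (offspring_sum n c t < s.+1)%N].
  by move=> t [[_ /=]]; rewrite offspring_sumS => <- _; right; rewrite /= ltnS leq_addr.
rewrite (pr_total_nat (measurable_offspring_sum n c) mE (negligible_set0 P) cover).
rewrite exprSr coefM !big_distrr big_distrl /=; apply: eq_bigr => -[b /= b_lt] _.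
have nc_notin : (n, c) \notin L by apply/negP => /L_later /= [|[_]]; rewrite ltnn.
pose k' l := if l == (n, c) then (s - b)%N else k l.
have k'nc : k' (n, c) = (s - b)%N by rewrite /k' eqxx.
have k'E : {in L, k' =1 k}.
  by move=> l lL; rewrite /k'; case: eqP => // lnc; rewrite -lnc lL in nc_notin.
have b_le : (b <= s)%N by rewrite -ltnS.
rewrite /E -!setIA (offspring_sumS_event b_le k'nc k'E) setIA IH /=; last 2 first.
- by rewrite nc_notin.
- move=> l; rewrite inE => /orP[/eqP -> |/L_later[|[l1 l2]]]; [by right | by left |].
  by right; split => //; exact: ltnW.
rewrite big_cons k'nc coef_pgf (eq_big_seq (fun l => pmf (k l))) => [|l /k'E -> //].
ring.
Qed.

Lemma pr_Z_succ_offspring n : Z_indep n -> forall L k j, uniq L ->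
  (forall l, l \in L -> (n < l.1)%N) ->
  pr ([set t | Z n.+1 t = j] `&` offspring_event L k)
  = (\sum_(i < (d ^ n).+1) pr [set t | Z n t = i] * (pgf ^+ i)`_j)
    * \prod_(l <- L) pmf (k l).
Proof.
move=> Zind L k j uL L_later.
have mE : measurable ([set t | Z n.+1 t = j] `&` offspring_event L k).
  by apply: measurableI; [exact: measurable_Z | exact: measurable_offspring_event].
rewrite (pr_Z_total n mE) big_distrl; apply: eq_bigr => i _ /=.
rewrite (_ : _ `&` _ = [set t | Z n t = i] `&` [set t | offspring_sum n i t = j]
    `&` offspring_event L k); first by rewrite pr_Z_offspring_sum // => l /L_later; left.
apply/seteqP; split => t /=.
- by move=> [[Zj ev] Zi]; do 2?split => //; rewrite -Zi.
- by move=> [[Zi Sj] ev]; do 2?split => //; rewrite Zi.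
Qed.

Lemma pr_Z_succ n : Z_indep n -> forall j,
  pr [set t | Z n.+1 t = j] = \sum_(i < (d ^ n).+1) pr [set t | Z n t = i] * (pgf ^+ i)`_j.
Proof.
move=> Zind j; have := @pr_Z_succ_offspring n Zind [::] (fun _ => 0%N) j isT.
by rewrite offspring_event_nil setIT big_nil mulr1; apply => l; rewrite in_nil.
Qed.

Lemma Z_indepP n : Z_indep n.
Proof.
elim: n => [|n IH] L k j uL L_later; last first.
  by rewrite pr_Z_succ_offspring // ?pr_Z_succ // => l /L_later.
have [->|j_neq1] := eqVneq j 1%N.
  rewrite (_ : [set t | Z 0 t = 1%N] = setT); last by apply/seteqP.
  by rewrite setTI pr_setT mul1r pr_offspring_event.
rewrite (_ : [set t | Z 0 t = j] = set0) ?set0I ?pr_set0 ?mul0r //.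
by apply/seteqP; split => // t /= j1; rewrite -j1 eqxx in j_neq1.
Qed.

(* Z_n <= d^n almost surely, so this is the full generating function of Z_n. *)
Definition Zpgf n (y : R) := \sum_(j < (d ^ n).+1) pr [set t | Z n t = j] * y ^+ j.

Lemma Zpgf0 y : Zpgf 0 y = y.
Proof.
rewrite /Zpgf expn0 big_ord_recr big_ord1 /=.
rewrite (_ : [set t | Z 0 t = 0%N] = set0); last by apply/seteqP; split => // t.
rewrite (_ : [set t | Z 0 t = 1%N] = setT); last by apply/seteqP.
by rewrite pr_set0 pr_setT mul0r add0r mul1r expr1.
Qed.

Lemma Zpgf_succ n y : Zpgf n.+1 y = Zpgf n pgf.[y].
Proof.
rewrite /Zpgf; under eq_bigr do rewrite (pr_Z_succ (@Z_indepP n)) big_distrl.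
rewrite exchange_big /=; apply: eq_bigr => i _.
rewrite -horner_exp (@horner_coef_wide _ (d ^ n.+1).+1); last first.
  apply: leq_trans (size_poly_exp_leq _ _) _; rewrite ltnS expnS.
  apply: leq_mul; last by rewrite -ltnS.
  by rewrite -subn1 leq_subLR add1n size_pgf.
by rewrite big_distrr /=; apply: eq_bigr => j _; rewrite mulrA.
Qed.

Lemma le_Zpgf n y y' : 0 <= y -> y <= y' -> Zpgf n y <= Zpgf n y'.
Proof.
move=> y_ge0 yy'; apply: ler_sum => j _; apply: ler_wpM2l; first exact: pr_ge0.
by apply: lerXn2r => //; rewrite nnegrE (le_trans y_ge0).
Qed.

Lemma pr_W_gt_le n (x lam m : R) : 0 <= lam -> 0 < m ->
  pr [set t | x < (Z n t)%:R / m ^+ n]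
    <= expR (- (lam * x)) * Zpgf n (expR (lam / m ^+ n)).
Proof.
move=> lam_ge0 m_gt0.
have mE := measurable_nat_pred (fun j => x < j%:R / m ^+ n) (measurable_Z n).
rewrite (pr_Z_total n mE) /Zpgf big_distrr /=; apply: ler_sum => j _.
have [x_lt|x_ge] := boolP (x < j%:R / m ^+ n); last first.
  rewrite (_ : _ `&` _ = set0) ?pr_set0; last first.
    by apply/seteqP; split => // t /= [x_lt Zj]; rewrite -Zj x_lt in x_ge.
  by rewrite mulr_ge0 ?expR_ge0 // mulr_ge0 ?pr_ge0 // exprn_ge0 ?expR_ge0.
rewrite (_ : _ `&` _ = [set t | Z n t = j]); last first.
  by apply/seteqP; split => [t [] //|t /= Zj]; rewrite Zj.
rewrite -expRM_natl mulrCA -expRD -[X in X <= _]mulr1 ler_wpM2l ?pr_ge0 //.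
rewrite -[leLHS]expR0 ler_expR addrC subr_ge0 mulrCA.
by apply: ler_wpM2l => //; exact: ltW.
Qed.

Variable m : R.
Hypothesis pgf_mean : m = \sum_(k < d.+1) k%:R * pmf k.

Lemma pgf_expR_le u : 0 <= u -> pgf.[expR u] <= expR (m * u * expR (u * d%:R)).
Proof.
move=> u_ge0; rewrite horner_pgf; apply: le_trans (expR_ge1Dx _).
have term_le (a : 'I_d.+1) :
    pmf a * expR u ^+ a <= pmf a + a%:R * pmf a * (u * expR (u * d%:R)).
  rewrite -expRM_natl (_ : _ + _ = pmf a * (1 + a%:R * u * expR (u * d%:R))); last by ring.
  rewrite ler_wpM2l ?pr_ge0 //.
  apply: le_trans (expR_le1DxexpR (mulr_ge0 (ler0n _ a) u_ge0)) _.
  rewrite lerD2l ler_wpM2l ?mulr_ge0 // ler_expR mulrC ler_wpM2l //.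
  by rewrite ler_nat -ltnS.
apply: le_trans (ler_sum _ (fun a _ => term_le a)) _.
by rewrite big_split /= sum_pmf -mulr_suml -pgf_mean mulrA.
Qed.

Lemma Zpgf_expR_le n u : 0 <= m -> 0 <= u ->
  Zpgf n (expR u) <= expR (iter n (fun v => m * v * expR (v * d%:R)) u).
Proof.
move=> m_ge0; elim: n u => [|n IH] u u_ge0; first by rewrite Zpgf0.
rewrite Zpgf_succ iterSr; apply: le_trans (IH _ _).
  by apply: le_Zpgf (pgf_expR_le u_ge0); exact: pgf_ge0 (expR_ge0 _).
by rewrite !mulr_ge0 ?expR_ge0.
Qed.

Lemma W_tail_le n r : 1 < m -> (0 < d)%N -> (0 < r)%N ->
  pr [set t | 5 * (8 * m / (m - 1)) * d%:R * r%:R < (Z n t)%:R / m ^+ n]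
    <= expR (- ((ln 3 - 1) * r%:R)).
Proof.
move=> m_gt1 d_gt0 r_gt0.
have m_gt0 : 0 < m by lra.
have d_ge1 : 1 <= d%:R :> R by rewrite ler1n.
pose lam := (m - 1) / (expR 1 * d%:R).
have lam_ge0 : 0 <= lam by rewrite divr_ge0 ?mulr_ge0 ?expR_ge0 //; lra.
have lam_e_d : lam * expR 1 * d%:R = m - 1.
  by rewrite /lam; field; rewrite !gt_eqF ?expR_gt0 //; lra.
have := iter_growth_le (n := n) m_gt1 _ lam_ge0 lam_e_d (leqnn n).
rewrite divff ?mulr1 ?expf_neq0 ?gt_eqF //= => /(_ ltac:(lra)) /andP[_ iter_le].
have u_ge0 : 0 <= lam / m ^+ n by rewrite divr_ge0 // exprn_ge0 // ltW.
apply: le_trans (pr_W_gt_le _ _ lam_ge0 m_gt0) _.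
apply: (@le_trans _ _
  (expR (- (lam * (5 * (8 * m / (m - 1)) * d%:R * r%:R))) * expR (lam * expR 1))).
  rewrite ler_wpM2l ?expR_ge0 //; apply: le_trans (Zpgf_expR_le n (ltW m_gt0) u_ge0) _.
  by rewrite ler_expR.
rewrite -expRD ler_expR addrC; apply: W_tail_exponent => //.
by rewrite ler1n.
Qed.

End GaltonWatson.

Theorem mainTheorem5 (R : realType) (dsp : measure_display) (T : measurableType dsp)
  (P : probability T R) (xi : nat -> nat -> T -> nat) (d : nat) (m : R)
  (hd : (2 <= d)%N)
  (hmeas : forall n i k, measurable [set t | xi n i t = k])
  (hindep : mutually_independent_nat P (fun j => xi j.1 j.2))
  (hident : forall n i k, P [set t | xi n i t = k] = P [set t | xi 0%N 0%N t = k])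
  (hsupp : P [set t | (xi 0%N 0%N t <= d)%N] = 1%E)
  (hmean : m = \sum_(k < d.+1) k%:R * fine (P [set t | xi 0%N 0%N t = k]))
  (hm : 1 < m) :
  let a := 8 * m / (m - 1) in
  forall (r n : nat), (0 < r)%N ->
    (P [set t | (5 * a * d%:R * r%:R < (GW_Z xi n t)%:R / m ^+ n)%R]
    <= (expR (- ((ln 3 - 1) * r%:R)) + expR (- ((2 / 3) * r%:R)))%:E)%E.
Proof.
move=> a r n r_gt0.
rewrite prE; last first.
  exact: (measurable_nat_pred (fun j => 5 * a * d%:R * r%:R < j%:R / m ^+ n)
    (measurable_Z hmeas n)).
rewrite lee_fin; apply: le_trans (W_tail_le hmeas hindep hident hsupp hmean n hm _ r_gt0) _.
  exact: leq_trans hd.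
by rewrite lerDl expR_ge0.
Qed.
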